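(* Let $i\in[n]$ and suppose bidder $i$ runs the Meta-Algorithm with an input algorithm $\mathcal{A}$ whose regret in the standard online learning setting is at most $\mathrm{Reg}_{\mathcal{A}}$ for every sequence of reward vectors in $[-1,1]^{K+1}$. If every auction format $\mathcal{M}^{(t)}$ satisfies allocation monotonicity, then bidder $i$'s regret in the repeated auction game, \[ \mathrm{Reg}_i:=\max_{s:[0,1]\to B}\sum_{t\in[T]}\big(u_i^{(t)}(s)-u_i^{(t)}(s_i^{(t)})\big), \] is at most $\mathrm{Reg}_{\mathcal{A}}$ (for any realization of the other bidders' bids and of the formats).
   Context: Setting. There are $n$ bidders. Bidder $i$'s value $v_i\in[0,1]$ is drawn independently from a continuous distribution $\mathcal{D}_i$ on $[0,1]$ with CDF $F_i$; $F_i^{-1}(y):=\inf\{v\in[0,1]:F_i(v)\ge y\}$ is its quantile function. The bid set is $B:=\{j/K: j=0,\dots,K\}$. A bidding strategy is any $s:[0,1]\to B$. In round $t$ of a $T$-round repeated auction, bidder $i$ picks $s_i^{(t)}$; the auctioneer picks $\mathcal{M}^{(t)}=(\mathbf{x}^{(t)},\mathbf{p}^{(t)})$, $\mathbf{x}^{(t)}:B^n\to\Delta([n])$ (nonnegative entries summing to at most 1), $\mathbf{p}^{(t)}:B^n\to[0,1]^n$; other bidders' bids $\mathbf{b}_{-i}^{(t)}\in B^{n-1}$ are realized. Allocation monotonicity: $x_i^{(t)}(b_i,\mathbf{b}_{-i})\le x_i^{(t)}(b_i',\mathbf{b}_{-i})$ whenever $b_i\le b_i'$. Utility: $u_i^{(t)}(s):=\mathbb{E}_{v_i\sim\mathcal{D}_i}[x_i^{(t)}(s(v_i),\mathbf{b}_{-i}^{(t)})v_i-p_i^{(t)}(s(v_i),\mathbf{b}_{-i}^{(t)})]$.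 Quantile strategies: $\boldsymbol{\pi}\in\Delta([K+1])$ (probability simplex); $\Pi_0:=0$, $\Pi_j:=\sum_{\ell\le j}\pi_\ell$. The strategy $s_{i,\boldsymbol{\pi}}$ bids $0$ on $[0,F_i^{-1}(\Pi_1)]$ and $\frac{j-1}{K}$ on $(F_i^{-1}(\Pi_{j-1}),F_i^{-1}(\Pi_j)]$ for $j=2,\dots,K+1$. Define $\mathbf{g}_i^{(t)}(\boldsymbol{\pi})\in\mathbb{R}^{K+1}$ by \[ g_{i,k}^{(t)}(\boldsymbol{\pi}):=\sum_{j=k}^{K}\Big(x_i^{(t)}\big(\tfrac{j-1}{K},\mathbf{b}_{-i}^{(t)}\big)-x_i^{(t)}\big(\tfrac{j}{K},\mathbf{b}_{-i}^{(t)}\big)\Big)F_i^{-1}(\Pi_j)+x_i^{(t)}(1,\mathbf{b}_{-i}^{(t)})-p_i^{(t)}\big(\tfrac{k-1}{K},\mathbf{b}_{-i}^{(t)}\big). \] Online learning algorithm $\mathcal{A}$ over $K+1$ actions: each round outputs $\boldsymbol{\pi}^{(t)}\in\Delta([K+1])$, then sees $\mathbf{r}^{(t)}\in[-1,1]^{K+1}$; regret $\max_{j}\sum_t(r_j^{(t)}-\sum_k\pi^{(t)}_kr^{(t)}_k)$. Meta-Algorithm (bidder $i$): each round, $\mathcal{A}$ outputs $\boldsymbol{\pi}^{(i,t)}$, the bidder plays $s_i^{(t)}:=s_{i,\boldsymbol{\pi}^{(i,t)}}$, and afterwards feeds $\mathbf{r}^{(t)}:=\mathbf{g}_i^{(t)}(\boldsymbol{\pi}^{(i,t)})$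 to $\mathcal{A}$. *)

From HB Require Import structures.
From mathcomp Require Import all_boot all_order all_algebra.
From mathcomp Require Import all_classical all_reals all_analysis.
Set Implicit Arguments. Unset Strict Implicit. Unset Printing Implicit Defensive.
Import Order.TTheory GRing.Theory Num.Theory.
Local Open Scope classical_set_scope.
Local Open Scope ring_scope.

(* Bids are represented by their index j : 'I_K.+1, standing for the bid j/K.
   Actions of the online learner are 'I_K.+1 (0-based: paper's action k is k.+1 here). *)

Section Defs.
Variable R : realType.

Definition cdf (P : probability R R) (v : R) : R := fine (P `]-oo, v]%classic).

Definition quantile (P : probability R R) (y : R) : R :=
  inf [set v : R | 0 <= v <= 1 /\ y <= cdf P v].

Definition upd (n K : nat) (b : {ffun 'I_n -> 'I_K.+1}) (i : 'I_n) (j : 'I_K.+1)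
  : {ffun 'I_n -> 'I_K.+1} := [ffun l => if l == i then j else b l].

(* Pi_m := sum_{l <= m} pi_l (paper, 1-based) = sum of the first m entries *)
Definition Pi (K : nat) (pi : {ffun 'I_K.+1 -> R}) (m : nat) : R :=
  \sum_(l < K.+1 | (l < m)%N) pi l.

(* quantile strategy s_{i,pi}: bid index k (bid k/K) on (F^{-1}(Pi_k), F^{-1}(Pi_{k+1})],
   bid 0 on [0, F^{-1}(Pi_1)].  Points v > F^{-1}(Pi_K) (a region only partly covered
   by the paper, of probability 0 beyond F^{-1}(1)) get bid K. *)
Definition qstrat (P : probability R R) (K : nat) (pi : {ffun 'I_K.+1 -> R}) (v : R)
  : 'I_K.+1 := inord (find (fun k => v <= quantile P (Pi pi k.+1)) (iota 0 K)).

(* reward vector g_i^{(t)}(pi), with xb j = x_i(j/K, b_{-i}), pb j = p_i(j/K, b_{-i}) *)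
Definition gvec (P : probability R R) (K : nat) (xb pb : 'I_K.+1 -> R)
  (pi : {ffun 'I_K.+1 -> R}) : {ffun 'I_K.+1 -> R} :=
  [ffun k : 'I_K.+1 =>
     \sum_(k.+1 <= j < K.+1)
        (xb (inord j.-1) - xb (inord j)) * quantile P (Pi pi j)
     + xb ord_max - pb k].

Definition util (P : probability R R) (K : nat) (xb pb : 'I_K.+1 -> R)
  (s : R -> 'I_K.+1) : \bar R :=
  (\int[P]_v ((xb (s v) * v - pb (s v))%:E))%E.

(* history of reward vectors fed to A by the Meta-Algorithm before round t *)
Fixpoint meta_hist (P : probability R R) (K : nat)
  (A : seq {ffun 'I_K.+1 -> R} -> {ffun 'I_K.+1 -> R})
  (xb pb : nat -> 'I_K.+1 -> R) (t : nat) : seq {ffun 'I_K.+1 -> R} :=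
  match t with
  | 0 => [::]
  | t'.+1 => let h := meta_hist P A xb pb t' in
             rcons h (gvec P (xb t') (pb t') (A h))
  end.

Definition ol_regret (K : nat) (A : seq {ffun 'I_K.+1 -> R} -> {ffun 'I_K.+1 -> R})
  (r : nat -> {ffun 'I_K.+1 -> R}) (T : nat) (j : 'I_K.+1) : R :=
  \sum_(t < T) (r t j - \sum_(k < K.+1) A [seq r s | s <- iota 0 t] k * r t k).

End Defs.

From Pilot Require Import Defs.
From HB Require Import structures.
From mathcomp Require Import all_boot all_order all_algebra.
From mathcomp Require Import all_classical all_reals all_analysis.
From mathcomp Require Import zify lra.
Import Order.TTheory GRing.Theory Num.Theory.
Set Implicit Arguments. Unset Strict Implicit. Unset Printing Implicit Defensive.
Local Open Scope classical_set_scope.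
Local Open Scope ring_scope.

(* The expected utility of a strategy s splits as
     E[x(s v) v - p(s v) - g(s v)] + sum_k P(s = k) g_k.
   In the first term the payments cancel, and as a function of the bid index k the integrand
   x_k v - p_k - g_k increases while v exceeds the cut point F^{-1}(Pi_{k+1}) and decreases
   afterwards (allocation monotonicity), so the quantile strategy maximizes it pointwise; it
   also bids k with probability exactly pi_k.  Hence in every round the gain of s over the
   Meta-Algorithm is at most sum_k (P(s = k) - pi_k) g_k, and summing over the rounds gives
   the convex combination, with weights P(s = k), of the regrets of A against the rewards g,
   which lie in [-1, 1]. *)

Section Quantile.
Variables (R : realType) (P : probability R R).
Hypothesis P_support : P `[0%R, 1%R]%classic = 1%E.

Lemma measure_outside01 (A : set R) :
  measurable A -> A `<=` ~` `[0%R, 1%R]%classic -> P A = 0%E.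
Proof.
move=> mA A_out; apply/eqP; rewrite eq_le measure_ge0 andbT.
have <- : P (~` `[0%R, 1%R]%classic) = 0%E.
  by rewrite probability_setC // P_support subee.
by apply: le_measure => //; rewrite inE //; exact: measurableC.
Qed.

Lemma cdfE v : P `]-oo, v]%classic = (Defs.cdf P v)%:E.
Proof. by rewrite /Defs.cdf fineK ?fin_num_measure. Qed.

Lemma cdf_le1 v : Defs.cdf P v <= 1.
Proof. by rewrite -lee_fin -cdfE probability_le1. Qed.

Lemma cdf_le_cdf a b : a <= b -> Defs.cdf P a <= Defs.cdf P b.
Proof.
by move=> ab; rewrite -lee_fin -!cdfE; apply: le_measure; rewrite ?inE //; exact: subitvPr.
Qed.

Lemma cdf_lt0 v : v < 0 -> Defs.cdf P v = 0.
Proof.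
move=> v_lt0; rewrite /Defs.cdf measure_outside01 // => w /=.
rewrite !in_itv /= => wv /andP[w_ge0 _].
by move: (le_lt_trans (le_trans w_ge0 wv) v_lt0); rewrite ltxx.
Qed.

Lemma cdf1 : Defs.cdf P 1 = 1.
Proof.
apply/eqP; rewrite eq_le cdf_le1 -lee_fin -cdfE -P_support.
by apply: le_measure; rewrite ?inE // => w /=; rewrite !in_itv /= => /andP[].
Qed.

Let qset y := [set v : R | 0 <= v <= 1 /\ y <= Defs.cdf P v].

Let qset_lbound y : has_lbound (qset y).
Proof. by exists 0 => v [/andP[]]. Qed.

Let qset1 y : y <= 1 -> qset y 1.
Proof. by move=> y_le1; split; [rewrite ler01 lexx | rewrite cdf1]. Qed.

Lemma quantile_ge0 y : y <= 1 -> 0 <= quantile P y.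
Proof.
by move=> y_le1; apply: lb_le_inf; [exists 1; exact: qset1 | move=> v [/andP[]]].
Qed.

Lemma quantile_le1 y : y <= 1 -> quantile P y <= 1.
Proof. by move=> y_le1; apply: ge_inf; [exact: qset_lbound | exact: qset1]. Qed.

Lemma quantile_le_quantile y1 y2 :
  y1 <= y2 -> y2 <= 1 -> quantile P y1 <= quantile P y2.
Proof.
move=> y12 y2_le1; apply: lb_le_inf; first by exists 1; exact: qset1.
move=> v [v01 y2v]; apply: ge_inf; first exact: qset_lbound.
by split => //; exact: le_trans y2v.
Qed.

(* The cdf at q is the limit of the cdf at q + 1/(n+1), which is >= y since q is an infimum. *)
Lemma cdf_quantile_ge y : y <= 1 -> y <= Defs.cdf P (quantile P y).
Proof.
move=> y_le1; set q := quantile P y.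
pose F n := `]-oo, q + n.+1%:R^-1]%classic.
have F_cvg : (P \o F) n @[n --> \oo] --> P (\bigcap_n F n).
  apply: nonincreasing_cvg_mu.
  - by apply: (le_lt_trans (probability_le1 _ (measurable_itv _))); rewrite ltry.
  - by move=> k; exact: measurable_itv.
  - by apply: bigcapT_measurable => k; exact: measurable_itv.
  - move=> m k mk; apply/subsetPset; apply: subset_itvl.
    by rewrite bnd_simp lerD2l lef_pV2 ?posrE // ler_nat.
rewrite -(itvNycEbigcap false q) in F_cvg.
rewrite -lee_fin -cdfE -(cvg_lim _ F_cvg) //.
apply: lime_ge; first by apply/cvg_ex; exists (P `]-oo, q]%classic).
apply: nearW => k /=; rewrite /F cdfE lee_fin.
have [e [_ y_e] e_lt] : exists2 e, qset y e & e < q + k.+1%:R^-1.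
  by apply: inf_adherent => //; split; [exists 1; exact: qset1 | exact: qset_lbound].
by apply: le_trans y_e _; apply/cdf_le_cdf/ltW.
Qed.

Hypothesis P_atomless : forall r : R, P [set r] = 0%E.

Lemma measure_itvNyo q : P `]-oo, q[%classic = P `]-oo, q]%classic.
Proof.
have -> : `]-oo, q]%classic = `]-oo, q[%classic `|` [set q].
  apply/seteqP; split => w /=; rewrite !in_itv /=.
    by rewrite le_eqVlt => /orP[/eqP->|->]; [right|left].
  by case=> [/ltW|->].
rewrite measureU //; first by rewrite [X in (_ + X)%E]P_atomless adde0.
by apply/seteqP; split => w // [] /=; rewrite in_itv /= => + wq; rewrite wq ltxx.
Qed.

(* Below q the cdf is < y; the limit P ]-oo, q[ of the cdf at q - 1/(n+1) is the cdf at q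
   because P has no atoms. *)
Lemma cdf_quantile_le y : 0 <= y -> Defs.cdf P (quantile P y) <= y.
Proof.
move=> y_ge0; set q := quantile P y.
pose G n := `]-oo, q - n.+1%:R^-1]%classic.
have G_cvg : (P \o G) n @[n --> \oo] --> P (\bigcup_n G n).
  apply: nondecreasing_cvg_mu.
  - by move=> k; exact: measurable_itv.
  - by apply: bigcupT_measurable => k; exact: measurable_itv.
  - move=> m k mk; apply/subsetPset; apply: subset_itvl.
    by rewrite bnd_simp lerD2l lerN2 lef_pV2 ?posrE // ler_nat.
have G_cup : \bigcup_n G n = `]-oo, q[%classic.
  apply/seteqP; split => w /=.
    move=> [k _]; rewrite /G /= !in_itv /= => wq; apply: (le_lt_trans wq).
    by rewrite ltrBlDr ltrDl.
  rewrite in_itv /= => /ltr_add_invr [k wk]; exists k => //=.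
  by rewrite /G /= in_itv /= lerBrDr ltW.
rewrite G_cup in G_cvg.
rewrite -lee_fin -cdfE -measure_itvNyo -(cvg_lim _ G_cvg) //.
apply: lime_le; first by apply/cvg_ex; exists (P `]-oo, q[%classic).
apply: nearW => k /=; rewrite /G cdfE lee_fin.
set w := q - k.+1%:R^-1.
have [w_lt0|w_ge0] := ltP w 0; first by rewrite cdf_lt0.
have w_lt_q : w < q by rewrite /w ltrBlDr ltrDl.
rewrite leNgt; apply/negP => /ltW y_cdf.
have : q <= w.
  apply: ge_inf; first exact: qset_lbound.
  split => //; rewrite w_ge0 /=; apply: le_trans (ltW w_lt_q) _.
  by apply: quantile_le1; apply: le_trans y_cdf (cdf_le1 _).
by rewrite leNgt w_lt_q.
Qed.

Lemma cdf_quantile y : 0 <= y <= 1 -> Defs.cdf P (quantile P y) = y.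
Proof.
by case/andP=> y_ge0 y_le1; apply/eqP; rewrite eq_le cdf_quantile_le ?cdf_quantile_ge.
Qed.

End Quantile.

Section PrefixSums.
Variables (R : realType) (K : nat) (pi : {ffun 'I_K.+1 -> R}).
Hypotheses (pi_ge0 : forall k, 0 <= pi k) (pi_sum1 : \sum_(k < K.+1) pi k = 1).

Lemma Pi0 : Pi pi 0 = 0.
Proof. by rewrite /Pi big_pred0. Qed.

Lemma Pi_ge0 m : 0 <= Pi pi m.
Proof. exact: sumr_ge0. Qed.

Lemma Pi_le_Pi m m' : (m <= m')%N -> Pi pi m <= Pi pi m'.
Proof.
move=> mm'; rewrite /Pi [leRHS](bigID (fun l : 'I_K.+1 => (l < m)%N)) /=.
rewrite [X in _ <= X + _](eq_bigl (fun l : 'I_K.+1 => (l < m)%N)) ?lerDl ?sumr_ge0 // => l.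
by case: (ltnP l m) => lm; rewrite ?andbT ?andbF // (leq_trans lm mm').
Qed.

Lemma Pi_full m : (K.+1 <= m)%N -> Pi pi m = 1.
Proof.
by move=> Km; rewrite -pi_sum1; apply: eq_bigl => l; rewrite (leq_trans (ltn_ord l) Km).
Qed.

Lemma Pi_le1 m : Pi pi m <= 1.
Proof.
case: (leqP m K.+1) => mK; last by rewrite Pi_full // ltnW.
by rewrite -(@Pi_full K.+1 (leqnn _)) Pi_le_Pi.
Qed.

Lemma Pi_ge0_le1 m : 0 <= Pi pi m <= 1.
Proof. by rewrite Pi_ge0 Pi_le1. Qed.

Lemma PiS (k : 'I_K.+1) : Pi pi k.+1 = Pi pi k + pi k.
Proof.
rewrite /Pi (bigID (fun l : 'I_K.+1 => (l < k)%N)) /=; congr (_ + _).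
  by apply: eq_bigl => l; case: (ltnP l k) => lk; rewrite ?andbT ?andbF // ltnS ltnW.
rewrite (big_pred1 k) // => l /=; rewrite -leqNgt ltnS.
by rewrite -(inj_eq val_inj) /= eqn_leq.
Qed.

End PrefixSums.

Section QuantileStrategy.
Variables (R : realType) (P : probability R R).
Hypothesis P_support : P `[0%R, 1%R]%classic = 1%E.
Variables (K : nat) (pi : {ffun 'I_K.+1 -> R}).
Hypotheses (pi_ge0 : forall k, 0 <= pi k) (pi_sum1 : \sum_(k < K.+1) pi k = 1).

Definition qcut j := quantile P (Pi pi j).

Lemma qcut_ge0 j : 0 <= qcut j.
Proof. exact/(quantile_ge0 P_support)/Pi_le1. Qed.

Lemma qcut_le1 j : qcut j <= 1.
Proof. exact/(quantile_le1 P_support)/Pi_le1. Qed.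

Lemma qcut_le_qcut j j' : (j <= j')%N -> qcut j <= qcut j'.
Proof.
by move=> jj'; apply: (quantile_le_quantile P_support); [exact: Pi_le_Pi | exact: Pi_le1].
Qed.

Definition qindex v := find (fun k => v <= qcut k.+1) (iota 0 K).

Lemma qindex_le v : (qindex v <= K)%N.
Proof. by rewrite -[leqRHS](size_iota 0 K) find_size. Qed.

Lemma qstratE v : qstrat P pi v = qindex v :> nat.
Proof. by apply: inordK; rewrite ltnS qindex_le. Qed.

Lemma qindex_ltE v j : (0 < j <= K)%N -> (qindex v < j)%N = (v <= qcut j).
Proof.
case/andP=> j_gt0 jK; apply/idP/idP => [vj | v_le].
  have v_le := @nth_find _ 0 (fun k => v <= qcut k.+1) (iota 0 K).
  rewrite has_find size_iota nth_iota ?add0n in v_le; last exact: leq_trans vj jK.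
  exact: le_trans (v_le (leq_trans vj jK)) (qcut_le_qcut vj).
rewrite ltnNge; apply/negP => jm.
have jm' : (j.-1 < qindex v)%N by rewrite prednK.
have := before_find 0 jm'; rewrite nth_iota; last exact: leq_trans jm' (qindex_le v).
by rewrite add0n prednK // v_le.
Qed.

Lemma qindex_lt0 : [set v : R | (qindex v < 0)%N] = set0.
Proof. by apply/seteqP; split => v. Qed.

Lemma qindex_lt_itv j :
  (0 < j <= K)%N -> [set v : R | (qindex v < j)%N] = `]-oo, qcut j]%classic.
Proof. by move=> jK; apply/seteqP; split => v /=; rewrite in_itv /= qindex_ltE. Qed.

Lemma qindex_lt_full j : (K < j)%N -> [set v : R | (qindex v < j)%N] = setT.
Proof.
by move=> Kj; apply/seteqP; split => v // _; exact: leq_ltn_trans (qindex_le v) Kj.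
Qed.

Lemma measurable_qindex_lt j : measurable [set v : R | (qindex v < j)%N].
Proof.
case: j => [|j]; first by rewrite qindex_lt0.
have [jK|Kj] := leqP j.+1 K; first by rewrite qindex_lt_itv //; exact: measurable_itv.
by rewrite qindex_lt_full.
Qed.

Hypothesis P_atomless : forall r : R, P [set r] = 0%E.

Lemma measure_qindex_lt j :
  (j <= K.+1)%N -> P [set v : R | (qindex v < j)%N] = (Pi pi j)%:E.
Proof.
case: j => [|j] jK; first by rewrite qindex_lt0 measure0 Pi0.
have [jK'|Kj] := leqP j.+1 K.
  by rewrite qindex_lt_itv // cdfE cdf_quantile // Pi_ge0_le1.
by rewrite qindex_lt_full // probability_setT Pi_full.
Qed.

Lemma qstrat_preimage k : qstrat P pi @^-1` [set k] =
  [set v : R | (qindex v < k.+1)%N] `\` [set v : R | (qindex v < k)%N].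
Proof.
apply/seteqP; split => v /=.
  by move=> <-; rewrite qstratE ltnSn ltnn.
move=> [v_le v_ge]; apply: val_inj; rewrite /= qstratE.
by apply/eqP; rewrite eqn_leq -ltnS v_le leqNgt; exact/negP.
Qed.

Lemma measurable_qstrat_preimage k : measurable (qstrat P pi @^-1` [set k]).
Proof. by rewrite qstrat_preimage; apply: measurableD; exact: measurable_qindex_lt. Qed.

Lemma measure_qstrat_preimage k : P (qstrat P pi @^-1` [set k]) = (pi k)%:E.
Proof.
have mlt := measurable_qindex_lt.
rewrite qstrat_preimage (measureD (mlt _) (mlt _)); last by rewrite ltey_eq fin_num_measure.
rewrite setIidr; last by move=> v /= /ltnW.
rewrite [X in (X - _)%E]measure_qindex_lt // [X in (_ - X)%E]measure_qindex_lt 1?ltnW //.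
by rewrite -EFinB PiS addrAC subrr add0r.
Qed.

End QuantileStrategy.

Lemma le_unimodal_max disp (T : porderType disp) (f : nat -> T) (m K : nat) :
  (forall k, (k < m)%N -> (f k <= f k.+1)%O) ->
  (forall k, (m <= k < K)%N -> (f k.+1 <= f k)%O) ->
  forall k, (k <= K)%N -> (f k <= f m)%O.
Proof.
move=> f_up f_down k kK; have [km|mk] := leqP k m.
  have up d j : (j + d)%N = m -> (f j <= f m)%O.
    elim: d j => [|d IH] j; first by move=> <-; rewrite addn0.
    move=> jdm; apply: le_trans (IH j.+1 _); last by rewrite addSnnS.
    by apply: f_up; rewrite -jdm addnS ltnS leq_addr.
  exact: up (subnKC km).
have down d : (m + d <= K)%N -> (f (m + d)%N <= f m)%O.
  elim: d => [|d IH] mdK; first by rewrite addn0.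
  rewrite addnS in mdK *; apply: le_trans (IH (ltnW mdK)).
  by apply: f_down; rewrite leq_addr mdK.
by rewrite -(subnKC (ltnW mk)); apply: down; rewrite subnKC // ltnW.
Qed.

Section Rewards.
Variables (R : realType) (P : probability R R).
Hypothesis P_support : P `[0%R, 1%R]%classic = 1%E.
Variables (K : nat) (pi : {ffun 'I_K.+1 -> R}).
Hypotheses (pi_ge0 : forall k, 0 <= pi k) (pi_sum1 : \sum_(k < K.+1) pi k = 1).
Variables (xb pb : 'I_K.+1 -> R).
Hypothesis xb_mono : forall j j' : 'I_K.+1, (j <= j')%N -> xb j <= xb j'.

Let xn j := xb (inord j).

Let xnS k : (k < K)%N -> xn k <= xn k.+1.
Proof. by move=> kK; apply: xb_mono; rewrite !inordK //; lia. Qed.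

Let xn_max : xn K = xb ord_max.
Proof. by congr xb; apply: val_inj; rewrite /= inordK. Qed.

Definition tail_sum k := \sum_(k.+1 <= j < K.+1) (xn j.-1 - xn j) * qcut P pi j.

Lemma gvecE (k : 'I_K.+1) : gvec P xb pb pi k = tail_sum k + xb ord_max - pb k.
Proof. by rewrite ffunE. Qed.

Definition net_utility k v := xn k * v - tail_sum k - xb ord_max.

Lemma net_utilityE (k : 'I_K.+1) v :
  xb k * v - pb k - gvec P xb pb pi k = net_utility k v.
Proof. by rewrite gvecE /net_utility /xn inord_val; lra. Qed.

Lemma net_utilityS k v : (k < K)%N ->
  net_utility k.+1 v - net_utility k v = (xn k.+1 - xn k) * (v - qcut P pi k.+1).
Proof.
move=> kK; have tail_sumS : tail_sum k = (xn k - xn k.+1) * qcut P pi k.+1 + tail_sum k.+1.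
  by rewrite /tail_sum big_ltn ?ltnS.
by rewrite /net_utility tail_sumS; lra.
Qed.

Lemma net_utility_le_qindex k v :
  (k <= K)%N -> net_utility k v <= net_utility (qindex P pi v) v.
Proof.
have qindex_ltE := qindex_ltE P_support pi_ge0 pi_sum1.
apply: (le_unimodal_max (f := net_utility^~ v)) => j.
  move=> jm; have jK : (j < K)%N := leq_trans jm (qindex_le P pi v).
  rewrite -subr_ge0 net_utilityS // mulr_ge0 ?subr_ge0 ?xnS //.
  by apply: ltW; rewrite ltNge -qindex_ltE ?ltnS // -ltnNge.
case/andP=> mj jK; rewrite -subr_le0 net_utilityS // mulr_ge0_le0 ?subr_ge0 ?xnS //.
by rewrite subr_le0 -qindex_ltE ?ltnS.
Qed.

Let xn_pred j : (0 < j <= K)%N -> xn j.-1 <= xn j.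
Proof. by case: j => // j /andP[_ jK]; exact: xnS. Qed.

Lemma tail_sum_le0 k : tail_sum k <= 0.
Proof.
rewrite /tail_sum big_nat_cond; apply: sumr_le0 => j /andP[/andP[kj jK] _].
rewrite mulr_le0_ge0 ?(qcut_ge0 P_support) // subr_le0 xn_pred //.
by rewrite (leq_ltn_trans _ kj).
Qed.

Lemma tail_sum_ge k : (k <= K)%N -> xn k - xn K <= tail_sum k.
Proof.
move=> kK.
have -> : xn k - xn K = \sum_(k.+1 <= j < K.+1) (xn j.-1 - xn j).
  rewrite (@telescope_sumr_eq _ _ _ (fun j => - xn j.-1)) //; first by rewrite opprK addrC.
  by move=> j _; rewrite opprK addrC.
apply: ler_sum_nat => j /andP[kj jK]; rewrite -[leLHS]mulr1.
apply: ler_wnM2l; last exact: (qcut_le1 P_support pi_ge0 pi_sum1).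
by rewrite subr_le0 xn_pred // (leq_ltn_trans _ kj).
Qed.

Hypotheses (xb_ge0 : forall j, 0 <= xb j) (xb_le1 : forall j, xb j <= 1).
Hypotheses (pb_ge0 : forall j, 0 <= pb j) (pb_le1 : forall j, pb j <= 1).

Lemma gvec_bound (k : 'I_K.+1) : -1 <= gvec P xb pb pi k <= 1.
Proof.
have := tail_sum_le0 k; have := tail_sum_ge (ltnSE (ltn_ord k)).
rewrite gvecE xn_max /xn inord_val.
have := xb_ge0 k; have := xb_le1 ord_max; have := pb_ge0 k; have := pb_le1 k.
move: (xb k) (xb ord_max) (pb k) (tail_sum k) => a b c d *; apply/andP; split; lra.
Qed.

End Rewards.

Section StrategyIntegrals.
Variables (R : realType) (P : probability R R).
Hypothesis P_support : P `[0%R, 1%R]%classic = 1%E.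
Variables (K : nat) (s : R -> 'I_K.+1).
Hypothesis s_meas : forall k, measurable (s @^-1` [set k]).

Lemma integral_setT_itv01 (f : R -> R) : measurable_fun setT f ->
  (\int[P]_x (f x)%:E = \int[P]_(x in `[0%R, 1%R]%classic) (f x)%:E)%E.
Proof.
move=> mf; set I01 : set R := `[0%R, 1%R]%classic.
have mI01 : measurable I01 by exact: measurable_itv.
have mCI01 : measurable (~` I01) by exact: measurableC.
rewrite -(setUv I01) integral_setU //; last 2 first.
- by rewrite setUv; exact/measurable_realfun.measurable_EFinP.
- by rewrite /disj_set setICr.
rewrite [X in (_ + X)%E]null_set_integral ?adde0 //.
  by apply/measurable_realfun.measurable_EFinP; exact: measurable_funTS.
exact: (measure_outside01 P_support mCI01 (@subset_refl _ _)).
Qed.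

Lemma strategy_sum_indic (c : 'I_K.+1 -> R -> R) v :
  c (s v) v = \sum_k \1_(s @^-1` [set k]) v * c k v.
Proof.
rewrite (bigD1 (s v)) //= big1 ?addr0; first by rewrite indicE mem_set ?mul1r.
by move=> k /negbTE sk; rewrite indicE memNset ?mul0r //= => svk; rewrite svk eqxx in sk.
Qed.

Lemma measurable_strategy_comp (c : 'I_K.+1 -> R -> R) :
  (forall k, measurable_fun setT (c k)) -> measurable_fun setT (fun v => c (s v) v).
Proof.
move=> mc; rewrite (funext (strategy_sum_indic c)).
by apply: measurable_sum => k; exact: measurable_realfun.measurable_funM.
Qed.

Lemma integrable_strategy_comp (D : set R) (c : 'I_K.+1 -> R -> R) (M : R) :
  measurable D -> (forall k, measurable_fun setT (c k)) ->
  (forall k v, D v -> `|c k v| <= M) ->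
  P.-integrable D (EFin \o (fun v => c (s v) v)).
Proof.
move=> mD mc c_bound; apply: measurable_bounded_integrable => //.
- exact: le_lt_trans (probability_le1 P mD) (ltry 1).
- exact: measurable_funTS (measurable_strategy_comp mc).
- exists M; split => [|M' MM' v Dv /=]; first exact: num_real.
  exact: le_trans (c_bound _ _ Dv) (ltW MM').
Qed.

Lemma integral_strategy_cst (c : 'I_K.+1 -> R) :
  (\int[P]_x (c (s x))%:E = (\sum_k fine (P (s @^-1` [set k])) * c k)%:E)%E.
Proof.
under eq_integral => v _ do rewrite (strategy_sum_indic (fun k _ => c k)) -sumEFin.
under eq_integral => v _ do under eq_bigr => k _ do rewrite EFinM muleC.
rewrite integral_sum //; last by move=> k; apply: integrableZl => //; exact: integrable_indic.
rewrite -sumEFin; apply: eq_bigr => k _.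
rewrite integralZl //; last exact: integrable_indic.
by rewrite integral_indic // setIT EFinM fineK ?fin_num_measure // muleC.
Qed.

Lemma sum_measure_preimage : \sum_k fine (P (s @^-1` [set k])) = 1.
Proof.
have := integral_strategy_cst (fun _ => 1).
rewrite (_ : (fun x => _) = cst 1%:E) // integral_cst // mul1e.
rewrite [X in X = _]probability_setT => /esym/eqP; rewrite eqe => /eqP <-.
by apply: eq_bigr => k _; rewrite mulr1.
Qed.

End StrategyIntegrals.

Section RoundRegret.
Variables (R : realType) (P : probability R R).
Hypothesis P_support : P `[0%R, 1%R]%classic = 1%E.
Hypothesis P_atomless : forall r : R, P [set r] = 0%E.
Variables (K : nat) (pi : {ffun 'I_K.+1 -> R}).
Hypotheses (pi_ge0 : forall k, 0 <= pi k) (pi_sum1 : \sum_(k < K.+1) pi k = 1).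
Variables (xb pb : 'I_K.+1 -> R).
Hypothesis xb_mono : forall j j' : 'I_K.+1, (j <= j')%N -> xb j <= xb j'.
Hypotheses (xb_ge0 : forall j, 0 <= xb j) (xb_le1 : forall j, xb j <= 1).
Hypotheses (pb_ge0 : forall j, 0 <= pb j) (pb_le1 : forall j, pb j <= 1).

Let g := gvec P xb pb pi.
Let I01 : set R := `[0%R, 1%R]%classic.

Let mI01 : measurable I01.
Proof. exact: measurable_itv. Qed.

Let g_bound k : `|g k| <= 1.
Proof. by rewrite ler_norml; exact: gvec_bound. Qed.

Let affine_measurable (a b : R) : measurable_fun setT (fun v : R => a * v - b).
Proof. exact: measurable_realfun.measurable_funB. Qed.

Let integrable_payoff (s : R -> 'I_K.+1) (r : 'I_K.+1 -> R) :
  (forall k, measurable (s @^-1` [set k])) -> (forall k, `|r k| <= 1) ->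
  P.-integrable I01 (EFin \o (fun v => xb (s v) * v - pb (s v) - r (s v))).
Proof.
move=> s_meas r_bound.
apply: (integrable_strategy_comp P s_meas (c := fun k v => xb k * v - pb k - r k) (M := 3)) => //.
  by move=> k; apply: measurable_realfun.measurable_funB => //; exact: affine_measurable.
move=> k v; rewrite /I01 /= in_itv /= => /andP[v_ge0 v_le1].
have := r_bound k; rewrite ler_norml => /andP[r_lb r_ub].
have xv_ge0 : 0 <= xb k * v by rewrite mulr_ge0.
have xv_le1 : xb k * v <= 1 by rewrite mulr_ile1.
have := pb_ge0 k; have := pb_le1 k.
by rewrite ler_norml => *; apply/andP; split; lra.
Qed.

Let net_payoff (s : R -> 'I_K.+1) :=
  (\int[P]_(v in I01) (xb (s v) * v - pb (s v) - g (s v))%:E)%E.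

Let net_payoff_fin_num s : (forall k, measurable (s @^-1` [set k])) ->
  net_payoff s \is a fin_num.
Proof.
by move=> s_meas; exact: (integrable_fin_num mI01 (integrable_payoff s_meas g_bound)).
Qed.

Lemma util_split (s : R -> 'I_K.+1) : (forall k, measurable (s @^-1` [set k])) ->
  util P xb pb s = (net_payoff s + (\sum_k fine (P (s @^-1` [set k])) * g k)%:E)%E.
Proof.
move=> s_meas.
rewrite /util (integral_setT_itv01 P_support (f := fun v => xb (s v) * v - pb (s v))); last first.
  exact: (measurable_strategy_comp s_meas (c := fun k v => xb k * v - pb k)).
under eq_integral => v _ do rewrite -[_ - pb (s v)](subrK (g (s v))) EFinD.
rewrite integralD //; last 2 first.
- exact: integrable_payoff s_meas g_bound.
- exact: (integrable_strategy_comp P s_meas (c := fun k _ => g k) (M := 1)).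
congr (_ + _)%E; rewrite -(integral_strategy_cst P s_meas) integral_setT_itv01 //.
exact: (measurable_strategy_comp s_meas (c := fun k _ => g k)).
Qed.

Lemma round_regret_le (s : R -> 'I_K.+1) : (forall k, measurable (s @^-1` [set k])) ->
  (util P xb pb s - util P xb pb (qstrat P pi) <=
   (\sum_k fine (P (s @^-1` [set k])) * g k - \sum_k pi k * g k)%:E)%E.
Proof.
move=> s_meas; have q_meas := measurable_qstrat_preimage P_support pi_ge0 pi_sum1.
have net_le : (net_payoff s <= net_payoff (qstrat P pi))%E.
  apply: le_integral => //; first exact: integrable_payoff s_meas g_bound.
    exact: integrable_payoff q_meas g_bound.
  move=> v _; rewrite lee_fin /g !net_utilityE qstratE.
  exact/(net_utility_le_qindex P_support pi_ge0 pi_sum1 xb_mono)/ltnSE/ltn_ord.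
have q_weights : \sum_k fine (P (qstrat P pi @^-1` [set k])) * g k = \sum_k pi k * g k.
  by apply: eq_bigr => k _; rewrite measure_qstrat_preimage.
rewrite !util_split // q_weights.
move: net_le (net_payoff_fin_num s_meas) (net_payoff_fin_num q_meas).
case: (net_payoff s) => // a; case: (net_payoff _) => // b.
by rewrite -!EFinD !lee_fin => ab _ _; lra.
Qed.

End RoundRegret.

Lemma meta_histE (R : realType) (P : probability R R) (K : nat)
    (A : seq {ffun 'I_K.+1 -> R} -> {ffun 'I_K.+1 -> R}) (xb pb : nat -> 'I_K.+1 -> R) t :
  meta_hist P A xb pb t =
  [seq gvec P (xb u) (pb u) (A (meta_hist P A xb pb u)) | u <- iota 0 t].
Proof. by elim: t => [|t IH] //; rewrite [LHS]/= {1}IH -cats1 -[t.+1]addn1 iotaD map_cat. Qed.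

Lemma ol_regret_mix (R : realType) (K T : nat)
    (A : seq {ffun 'I_K.+1 -> R} -> {ffun 'I_K.+1 -> R})
    (r : nat -> {ffun 'I_K.+1 -> R}) (w : 'I_K.+1 -> R) :
  \sum_k w k = 1 ->
  \sum_k w k * ol_regret A r T k =
  \sum_(t < T) (\sum_k w k * r t k - \sum_k A [seq r u | u <- iota 0 t] k * r t k).
Proof.
move=> w_sum1; rewrite /ol_regret.
under eq_bigr => k _ do rewrite mulr_sumr.
rewrite exchange_big /=; apply: eq_bigr => t _.
under eq_bigr => k _ do rewrite mulrBr.
by rewrite sumrB -mulr_suml w_sum1 mul1r.
Qed.

Unset Implicit Arguments.

Theorem mainTheorem2 (R : realType) (n K T : nat) (i : 'I_n)
  (P : probability R R)
  (P_support : P `[0%R, 1%R]%classic = 1%E)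
  (P_cont : forall r : R, P [set r] = 0%E)
  (x : nat -> {ffun 'I_n -> 'I_K.+1} -> 'I_n -> R)
  (p : nat -> {ffun 'I_n -> 'I_K.+1} -> 'I_n -> R)
  (x_ge0 : forall t b l, 0 <= x t b l)
  (x_sum : forall t b, \sum_(l < n) x t b l <= 1)
  (p_range : forall t b l, 0 <= p t b l <= 1)
  (x_mono : forall t (b : {ffun 'I_n -> 'I_K.+1}) (l : 'I_n) (j j' : 'I_K.+1),
      (j <= j')%N -> x t (upd b l j) l <= x t (upd b l j') l)
  (bo : nat -> {ffun 'I_n -> 'I_K.+1})
  (A : seq {ffun 'I_K.+1 -> R} -> {ffun 'I_K.+1 -> R})
  (A_simplex : forall h, (forall k, 0 <= A h k) /\ \sum_(k < K.+1) A h k = 1)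
  (RegA : R)
  (A_regret : forall r : nat -> {ffun 'I_K.+1 -> R},
      (forall t k, -1 <= r t k <= 1) ->
      forall j, ol_regret A r T j <= RegA) :
  let xb := fun t (j : 'I_K.+1) => x t (upd (bo t) i j) i in
  let pb := fun t (j : 'I_K.+1) => p t (upd (bo t) i j) i in
  let s_meta := fun t => qstrat P (A (meta_hist P A xb pb t)) in
  forall s : R -> 'I_K.+1,
    (forall j : 'I_K.+1, measurable (s @^-1` [set j])) ->
    (\sum_(t < T) (util P (xb t) (pb t) s - util P (xb t) (pb t) (s_meta t))
       <= RegA%:E)%E.
Proof.
move=> xb pb s_meta s s_meas.
pose pi t := A (meta_hist P A xb pb t).
pose r t := gvec P (xb t) (pb t) (pi t).
have pi_ge0 t k : 0 <= pi t k by case: (A_simplex (meta_hist P A xb pb t)).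
have pi_sum1 t : \sum_k pi t k = 1 by case: (A_simplex (meta_hist P A xb pb t)).
have xb_mono t (j j' : 'I_K.+1) : (j <= j')%N -> xb t j <= xb t j' by exact: x_mono.
have xb_ge0 t (j : 'I_K.+1) : 0 <= xb t j by exact: x_ge0.
have xb_le1 t (j : 'I_K.+1) : xb t j <= 1.
  by apply: le_trans (x_sum t (upd (bo t) i j)); rewrite /xb (bigD1 i) //= lerDl sumr_ge0.
have pb_ge0 t (j : 'I_K.+1) : 0 <= pb t j by case/andP: (p_range t (upd (bo t) i j) i).
have pb_le1 t (j : 'I_K.+1) : pb t j <= 1 by case/andP: (p_range t (upd (bo t) i j) i).
have r_bound t k : -1 <= r t k <= 1.
  exact: (gvec_bound P_support (pi_ge0 t) (pi_sum1 t) (xb_mono t) (xb_ge0 t)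
    (xb_le1 t) (pb_ge0 t) (pb_le1 t)).
apply: (@le_trans _ _ (\sum_(t < T)
    (\sum_k fine (P (s @^-1` [set k])) * r t k - \sum_k pi t k * r t k)%:E)%E).
  apply: lee_sum => t _.
  exact: (round_regret_le P_support P_cont (pi_ge0 t) (pi_sum1 t) (xb_mono t) (xb_ge0 t)
    (xb_le1 t) (pb_ge0 t) (pb_le1 t) s_meas).
rewrite sumEFin lee_fin.
under eq_bigr => t _ do rewrite /pi meta_histE -/(r _).
rewrite -(ol_regret_mix T A r (sum_measure_preimage P s_meas)).
apply: (@le_trans _ _ (\sum_k fine (P (s @^-1` [set k])) * RegA)).
  by apply: ler_sum => k _; rewrite ler_wpM2l ?fine_ge0 ?measure_ge0 ?A_regret.
by rewrite -mulr_suml (sum_measure_preimage P s_meas) mul1r.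
Qed.
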